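(* Let $G$ be a finite simple connected graph. If $c_{\infty}(G)=1$ then $G$ has no hallway.
   Context: Cops and Robber with an infinitely fast robber: the game is played on a graph $G$. A set of cops first choose initial vertices (several cops may share a vertex); then the robber, knowing their positions, chooses a vertex. Then the players move in alternating rounds, cops first. In the cops' turn each cop either stays or moves to an adjacent vertex; in the robber's turn she either stays or moves along any path of $G$ starting at her current vertex that contains no vertex currently occupied by a cop. The cops win if at some point a cop moves to the vertex occupied by the robber. $c_{\infty}(G)$ is the minimum number of cops for which the cops have a strategy that guarantees a win. A block of $G$ is either a maximal 2-connected subgraph or an edge not contained in any 2-connected subgraph. The block tree $B(G)$ is the bipartite tree whose vertices are the blocks and cut vertices of $G$, a block $B$ adjacent to a cut vertex $v$ iff $v\in V(B)$. If $u$ is a cut vertex and $B$ a block containing $u$ such that some vertex of $B$ is neither $u$ nor adjacent to $u$, then $(B,u)$ is a directed hole. For distinct blocks $B,B'$ with unique $(B,B')$-path $B\,u_1\cdots u_k\,B'$ in $B(G)$, $\{B,B'\}$ is a hallway if $(B,u_1)$ and $(B',u_k)$ are both directed holes. *)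

From mathcomp Require Import all_boot.
Set Implicit Arguments. Unset Strict Implicit. Unset Printing Implicit Defensive.

Section Graph.
Variables (T : finType) (e : rel T).

(* connectivity inside the subgraph induced by S (start vertex assumed in S) *)
Definition induced_rel (S : {set T}) : rel T := [rel x y | e x y && (y \in S)].
Definition connected_on (S : {set T}) : Prop :=
  forall x y, x \in S -> y \in S -> connect (induced_rel S) x y.
Definition graph_connected : Prop := forall x y, connect e x y.

Definition two_connected (S : {set T}) : Prop :=
  2 < #|S| /\ connected_on S /\ forall v, v \in S -> connected_on (S :\ v).

(* blocks, represented by their vertex sets (maximal 2-connected subgraphs are
   induced); a bridge block is {x, y} with xy an edge lying in no 2-connected
   subgraph *)
Definition is_block (B : {set T}) : Prop :=
  (two_connected B /\ forall B' : {set T}, B \proper B' -> ~ two_connected B') \/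
  (exists x y, e x y /\ B = [set x; y] /\
     forall S : {set T}, x \in S -> y \in S -> ~ two_connected S).

Definition cut_vertex (v : T) : Prop := ~ connected_on ([set: T] :\ v).

Definition directed_hole (B : {set T}) (u : T) : Prop :=
  cut_vertex u /\ is_block B /\ u \in B /\
  exists w, [/\ w \in B, w != u & ~~ e u w].

(* {B,B'} is a hallway: B u_1 B_1 ... u_k B' is the (unique) path between B
   and B' in the block tree B(G), and (B,u_1), (B',u_k) are directed holes *)
Definition hallway (B B' : {set T}) : Prop :=
  is_block B /\ is_block B' /\ B != B' /\
  exists (k : nat) (Bs : nat -> {set T}) (us : nat -> T),
    0 < k /\ Bs 0 = B /\ Bs k = B' /\
    (forall i, i <= k -> is_block (Bs i)) /\
    (forall i j, i <= k -> j <= k -> Bs i = Bs j -> i = j) /\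
    (forall i, 0 < i <= k -> [/\ cut_vertex (us i), us i \in Bs i.-1 & us i \in Bs i]) /\
    (forall i j, 0 < i <= k -> 0 < j <= k -> us i = us j -> i = j) /\
    directed_hole B (us 1) /\ directed_hole B' (us k).

(* Cops and robber with an infinitely fast robber, k cops *)
Definition occupied k (C : {ffun 'I_k -> T}) : {set T} := [set C i | i in 'I_k].
Definition cop_move k (C C' : {ffun 'I_k -> T}) : bool :=
  [forall i, (C' i == C i) || e (C i) (C' i)].
Definition robber_reach (occ : {set T}) : rel T := [rel x y | e x y && (y \notin occ)].

(* cop_win C r : with cops at C, robber at r, cops to move, the cops can force
   a capture in finitely many rounds (least fixed point) *)
Inductive cop_win k : {ffun 'I_k -> T} -> T -> Prop :=
| cop_win_step (C C' : {ffun 'I_k -> T}) (r : T) :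
    cop_move C C' ->
    (r \in occupied C' \/
     forall r', connect (robber_reach (occupied C')) r r' -> cop_win C' r') ->
    cop_win C r.

Definition cops_win (k : nat) : Prop :=
  exists C0 : {ffun 'I_k -> T}, forall r : T, cop_win C0 r.

Definition c_infty_eq (k : nat) : Prop :=
  cops_win k /\ forall j, j < k -> ~ cops_win j.

End Graph.

(* Let (B, u) and (B', u') be the directed holes at the two ends of a hallway, and pick
   w in B, w' in B' nonadjacent to u, u' respectively.  Along the block path consecutive
   blocks meet only in cut vertices, so u separates w from w' and u' separates w' from w;
   in particular the closed neighbourhoods of w and w' are disjoint.  If the cop steps next
   to w, the robber at w runs to w': she reaches u inside B minus the cop (blocks have no
   cut vertex), and from u she enters the component of G - u containing w', which the cop,
   being a neighbour of w, is not in.  Alternating between w and w'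
   she is never caught by a single cop. *)

From mathcomp Require Import all_boot zify.

Set Implicit Arguments. Unset Strict Implicit. Unset Printing Implicit Defensive.

Section SymmetricGraph.
Variables (T : finType) (e : rel T).
Hypothesis esym : symmetric e.
Implicit Types (A S : {set T}).

Definition edge_in (A : {set T}) : rel T := [rel x y | [&& x \in A, y \in A & e x y]].
Definition linked (A : {set T}) : rel T := connect (edge_in A).

Lemma linked_sym A : symmetric (linked A).
Proof. by apply: sym_connect_sym => x y; rewrite /edge_in /= esym andbCA. Qed.

Lemma linked_edge A x y : x \in A -> y \in A -> e x y -> linked A x y.
Proof. by move=> xA yA xy; apply: connect1; apply/and3P. Qed.

Lemma linked_subset A A' x y : A \subset A' -> linked A x y -> linked A' x y.
Proof.
move=> /subsetP sAA'; apply: connect_sub => u v /and3P [uA vA uv].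
by apply: linked_edge; rewrite ?sAA'.
Qed.

Lemma linked_mem A x y : linked A x y -> x \in A -> y \in A.
Proof.
case/connectP=> p; elim: p x => [|z p IHp] x /=; first by move=> _ ->.
by case/andP=> /and3P [_ zA _] zp yl _; apply: IHp zp yl zA.
Qed.

Lemma linked_within A A' x y :
  (forall z, linked A x z -> z \in A') -> linked A x y -> linked A' x y.
Proof.
move=> reachA' /connectP [p xp ->].
suff: forall z, linked A x z -> path (edge_in A) z p -> linked A' z (last z p).
  by apply=> //; apply: connect0.
elim: p {xp} => [|z' p IHp] z xz /=; first by move=> _; apply: connect0.
case/andP=> zz' z'p; have xz' : linked A x z' := connect_trans xz (connect1 zz').
apply: connect_trans (IHp z' xz' z'p).
by apply: linked_edge; rewrite ?reachA' //; case/and3P: zz'.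
Qed.

Lemma linked_exit A (P : {set T}) x y : linked A x y -> x \in A -> x \notin P -> y \in P ->
  exists d a, [/\ linked (A :\: P) x d, e d a, a \in P & a \in A].
Proof.
case/connectP=> p; elim: p x => [|z p IHp] x /=; first by move=> _ -> _ /negPf->.
case/andP=> /and3P [_ zA xz] zp yl xA xP yP.
have [zP | zNP] := boolP (z \in P); first by exists x, z; split=> //; apply: connect0.
have [d [a [zd da aP aA]]] := IHp z zp yl zA zNP yP.
by exists d, a; split=> //; apply: connect_trans zd; apply: linked_edge; rewrite ?inE ?xP ?zNP.
Qed.

Lemma connected_onP S : connected_on e S <-> {in S &, forall x y, linked S x y}.
Proof.
split=> [Sconn x y xS yS | Slinked x y xS yS].
  case/connectP: (Sconn x y xS yS) => p; elim: p x xS => [|z p IHp] x xS /=.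
    by move=> _ ->; apply: connect0.
  case/andP=> /andP [xz zS] zp yl.
  by apply: connect_trans (IHp z zS zp yl); apply: linked_edge.
by apply: connect_sub (Slinked x y xS yS) => u v /and3P [_ vS uv]; apply: connect1; apply/andP.
Qed.

Lemma connected_onU A (C : {set T}) c :
  connected_on e A -> connected_on e C -> c \in A -> c \in C -> connected_on e (A :|: C).
Proof.
move=> /connected_onP Aconn /connected_onP Cconn cA cC; apply/connected_onP.
have to_c x : x \in A :|: C -> linked (A :|: C) x c.
  case/setUP=> [xA | xC]; first exact: linked_subset (subsetUl A C) (Aconn x c xA cA).
  exact: linked_subset (subsetUr A C) (Cconn x c xC cC).
move=> x y xS yS; have cy : linked (A :|: C) c y by rewrite linked_sym to_c.
exact: connect_trans (to_c x xS) cy.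
Qed.

Lemma connected_on_sub_edge x y S : e x y -> S \subset [set x; y] -> connected_on e S.
Proof.
move=> xy /subsetP Sxy; apply/connected_onP=> a b aS bS.
have [-> | ab] := eqVneq a b; first exact: connect0.
apply: linked_edge => //; move: (Sxy a aS) (Sxy b bS) ab; rewrite !inE.
by case/orP=> /eqP-> /orP [] /eqP->; rewrite ?eqxx // (esym y).
Qed.

Lemma connected_on_path x s : path e x s -> connected_on e [set:: x :: s].
Proof.
elim: s x => [|z s IHs] x /=.
  by move=> _; apply/connected_onP=> y y'; rewrite !inE => /eqP-> /eqP->; apply: connect0.
case/andP=> xz zs; have -> : [set:: [:: x, z & s]] = [set x; z] :|: [set:: z :: s].
  by apply/setP=> y; rewrite !inE; case: (y == z); rewrite /= ?orbT ?orbF.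
apply: (connected_onU (c := z) (connected_on_sub_edge xz (subxx _)) (IHs z zs));
  by rewrite !inE eqxx ?orbT.
Qed.

Lemma connected_on_path_tail x s : path e x s -> connected_on e [set:: s].
Proof.
case: s => [|z s] /=; last by case/andP=> _; apply: connected_on_path.
by move=> _ y y'; rewrite inE.
Qed.

Definition nonseparable S := connected_on e S /\ forall v, connected_on e (S :\ v).

Lemma two_connected_nonseparable S : two_connected e S -> nonseparable S.
Proof.
case=> _ [Sconn SD1conn]; split=> // v; have [vS | vNS] := boolP (v \in S); first exact: SD1conn.
by have /setDidPl -> : [disjoint S & [set v]] by rewrite disjoint_sym disjoints1.
Qed.

Lemma block_nonseparable B : is_block e B -> nonseparable B.
Proof.
case=> [[B2c _] | [x [y [xy [-> _]]]]]; first exact: two_connected_nonseparable.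
by split=> [|v]; apply: connected_on_sub_edge xy _; rewrite ?subD1set.
Qed.

Lemma two_connectedU S1 S2 x y : two_connected e S1 -> two_connected e S2 ->
  x \in S1 -> x \in S2 -> y \in S1 -> y \in S2 -> x != y -> two_connected e (S1 :|: S2).
Proof.
move=> S1_2c S2_2c xS1 xS2 yS1 yS2 xy.
have [S1conn S1D1conn] := two_connected_nonseparable S1_2c.
have [S2conn S2D1conn] := two_connected_nonseparable S2_2c.
split; first by case: S1_2c => S1big _; rewrite (leq_trans S1big) ?subset_leq_card ?subsetUl.
split=> [|v _]; first exact: connected_onU S1conn S2conn xS1 xS2.
rewrite setDUl; have [<- | xv] := eqVneq x v.
  by apply: (connected_onU (c := y)); rewrite // !inE eq_sym xy.
by apply: (connected_onU (c := x)); rewrite // !inE xv.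
Qed.

Lemma set2_eq (a b x y : T) : x \in [set a; b] -> y \in [set a; b] -> x != y ->
  [set a; b] = [set x; y].
Proof. by rewrite !inE => /orP [] /eqP-> /orP [] /eqP->; rewrite ?eqxx // setUC. Qed.

Lemma bridge_blockE x1 y1 x y : x \in [set x1; y1] -> y \in [set x1; y1] -> x != y ->
  (forall S, x1 \in S -> y1 \in S -> ~ two_connected e S) ->
  [set x1; y1] = [set x; y] /\ forall S, x \in S -> y \in S -> ~ two_connected e S.
Proof.
move=> xB yB xy no2c; have E := set2_eq xB yB xy; split=> // S xS yS.
have inS z : z \in [set x; y] -> z \in S by rewrite !inE => /orP [] /eqP->.
by apply: no2c; apply: inS; rewrite -E !inE eqxx ?orbT.
Qed.

Lemma block_eq B B' x y : is_block e B -> is_block e B' ->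
  x \in B -> x \in B' -> y \in B -> y \in B' -> x != y -> B = B'.
Proof.
move=> [[B2c Bmax] | [x1 [y1 [_ [-> no2c]]]]] [[B'2c B'max] | [x2 [y2 [_ [-> no2c']]]]]
  xB xB' yB yB' xy.
- have BU := two_connectedU B2c B'2c xB xB' yB yB' xy.
  have sB'B : B' \subset B.
    have : ~~ (B \proper B :|: B') by apply/negP => /Bmax; apply.
    by rewrite properEneq subsetUl andbT negbK eq_sym => /eqP/setUidPl.
  by apply/eqP; rewrite eq_sym eqEproper sB'B; apply/negP => /B'max; apply.
- by case: (bridge_blockE xB' yB' xy no2c') => _ /(_ B xB yB).
- by case: (bridge_blockE xB yB xy no2c) => _ /(_ B' xB' yB').
- by rewrite (bridge_blockE xB yB xy no2c).1 (bridge_blockE xB' yB' xy no2c').1.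
Qed.

Lemma setU_cons A x s : x \in A -> A :|: [set:: x :: s] = A :|: [set:: s].
Proof. by move=> xA; apply/setP=> z; rewrite !inE; case: eqP => // ->; rewrite xA. Qed.

Lemma setU_rcons A x s : x \in A -> A :|: [set:: rcons s x] = A :|: [set:: s].
Proof.
by move=> xA; apply/setP=> z; rewrite !inE mem_rcons in_cons; case: eqP => // ->; rewrite xA.
Qed.

Section Ear.
Variables (B : {set T}) (a b : T) (s : seq T).
Hypotheses (Bnsep : nonseparable B) (aB : a \in B) (bB : b \in B) (ab : a != b)
  (ear : path e a (rcons s b)) (s_uniq : uniq s) (sNB : {in s, forall z, z \notin B}).

Let S := B :|: [set:: s].

Let ear_path : path e a s.
Proof. by move: ear; rewrite rcons_path => /andP []. Qed.

Let ear_connected : connected_on e S.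
Proof.
rewrite /S -(setU_cons _ aB).
by apply: (connected_onU (c := a) Bnsep.1 (connected_on_path ear_path)); rewrite ?inE ?eqxx.
Qed.

Let ear_D1_block v : v \in B -> connected_on e (S :\ v).
Proof.
move=> vB; have vNs : v \notin s by apply: contraL vB => /sNB.
have -> : S :\ v = (B :\ v) :|: [set:: s].
  by rewrite /S setDUl; congr (_ :|: _); apply/setDidPl; rewrite disjoint_sym disjoints1 inE.
have [<- | av] := eqVneq a v.
  have bBa : b \in B :\ a by rewrite !inE eq_sym ab.
  rewrite -(setU_rcons _ bBa).
  apply: (connected_onU (Bnsep.2 a) (connected_on_path_tail ear) bBa).
  by rewrite inE mem_rcons mem_head.
have aBv : a \in B :\ v by rewrite !inE av.
rewrite -(setU_cons _ aBv).
by apply: (connected_onU (Bnsep.2 v) (connected_on_path ear_path) aBv); rewrite inE mem_head.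
Qed.

Let ear_D1_inner v : v \in s -> connected_on e (S :\ v).
Proof.
move=> vs; have [s1 [s2 def_s]] : exists s1 s2, s = s1 ++ v :: s2.
  by case/splitPr: vs => s1 s2; exists s1, s2.
move: ear s_uniq sNB; rewrite /S def_s rcons_cat cat_path => /andP [path1 /andP [_ path2]].
rewrite cat_uniq /= => /and4P [_ /norP [vNs1 _] vNs2 _] s12NB.
have vNB : v \notin B by apply: s12NB; rewrite mem_cat mem_head orbT.
have -> : (B :|: [set:: s1 ++ v :: s2]) :\ v = (B :|: [set:: a :: s1]) :|: [set:: rcons s2 b].
  apply/setP=> z; rewrite !inE mem_cat mem_rcons !in_cons.
  have [-> | zv] := eqVneq z v; rewrite /=.
    have [va vb] : v != a /\ v != b by split; apply: contraNneq vNB => ->.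
    by rewrite (negbTE vNB) (negbTE vNs1) (negbTE vNs2) (negbTE va) (negbTE vb).
  case: eqP => [-> | _] /=; first by rewrite aB.
  by case: eqP => [-> | _] /=; rewrite ?bB ?orbT ?orbA.
apply: (connected_onU (c := b)).
- by apply: (connected_onU (c := a) Bnsep.1 (connected_on_path path1)); rewrite // inE mem_head.
- exact: connected_on_path_tail path2.
- by rewrite !inE bB.
- by rewrite inE mem_rcons mem_head.
Qed.

Lemma nonseparable_ear : nonseparable S.
Proof.
split=> [|v]; first exact: ear_connected.
have [vB | vNB] := boolP (v \in B); first exact: ear_D1_block.
have [vs | vNs] := boolP (v \in s); first exact: ear_D1_inner.
have /setDidPl -> : [disjoint S & [set v]] by rewrite disjoint_sym disjoints1 !inE negb_or vNB.
exact: ear_connected.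
Qed.

End Ear.

Lemma path_edge_in_mem A x p : path (edge_in A) x p -> {subset p <= A}.
Proof.
elim: p x => [|y p IHp] x //= /andP [/and3P [_ yA _] yp] z.
by rewrite in_cons => /orP [/eqP-> // | /(IHp y yp)].
Qed.

(* Such a detour would be an ear of B, contradicting the maximality of B. *)
Lemma block_no_detour B a b d d' : is_block e B -> a \in B -> b \in B -> a != b ->
  d \notin B -> e a d -> e d' b -> ~ linked (~: B) d d'.
Proof.
move=> Bblock aB bB ab dNB ad d'b /connectP [p0 dp0 d'p0].
case/shortenP: dp0 d'p0 => p dp dp_uniq _ d'p.
have dpNB : {in d :: p, forall z, z \notin B}.
  by move=> z; rewrite in_cons => /predU1P [-> // | /(path_edge_in_mem dp)]; rewrite inE.
have ear : path e a (rcons (d :: p) b).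
  rewrite /= ad rcons_path -d'p d'b andbT.
  by apply: sub_path dp => x y /and3P [].
set S := B :|: [set:: d :: p].
have Snsep : nonseparable S.
  by apply: nonseparable_ear ear dp_uniq dpNB; first exact: block_nonseparable.
have dS : d \in S by rewrite !inE eqxx orbT.
have BS : B \proper S by rewrite properE subsetUl; apply/subsetPn; exists d.
have S2c : two_connected e S.
  have Bbig : 1 < #|B| by apply/card_gt1P; exists a, b.
  split; first exact: leq_ltn_trans Bbig (proper_card BS).
  by split=> [|v _]; [exact: Snsep.1 | exact: Snsep.2].
case: Bblock => [[_ Bmax] | [x [y [_ [EB no2c]]]]]; first exact: Bmax BS S2c.
by apply: (no2c S) S2c; apply: (subsetP (proper_sub BS)); rewrite EB !inE eqxx ?orbT.
Qed.

Lemma block_cut_separates B B' u y z : is_block e B -> is_block e B' -> B != B' ->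
  u \in B -> u \in B' -> y \in B -> y != u -> z \in B' -> z != u ->
  ~ linked [set~ u] y z.
Proof.
move=> Bblock B'block BB' uB uB' yB yu zB' zu; rewrite linked_sym => zy.
have zNB : z \notin B.
  by apply: contra BB' => zB; rewrite (block_eq Bblock B'block zB zB' uB uB' zu).
have zNu : z \in [set~ u] by rewrite !inE.
have [d [a [zd da aB]]] := linked_exit zy zNu zNB yB; rewrite !inE => au.
have /connected_onP B'conn := (block_nonseparable B'block).1.
have zu' : linked B' z u := B'conn z u zB' uB'.
have [d' [a' [zd' d'a' a'B a'B']]] := linked_exit zu' zB' zNB uB.
have a'u : a' = u.
  by apply: contraNeq BB' => a'u; rewrite (block_eq Bblock B'block a'B a'B' uB uB' a'u).
subst a'; have /setDP [_ dNB] : d \in [set~ u] :\: B.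
  by apply: (linked_mem zd); rewrite !inE zNB zu.
have outB A : A :\: B \subset ~: B by rewrite setDE subsetIr.
have dd' : linked (~: B) d d'.
  rewrite linked_sym in zd.
  exact: connect_trans (linked_subset (outB _) zd) (linked_subset (outB _) zd').
by apply: block_no_detour Bblock aB uB au dNB _ d'a' dd'; rewrite esym.
Qed.

Definition block_chain k (Bs : nat -> {set T}) (us : nat -> T) : Prop :=
  [/\ forall i, i <= k -> is_block e (Bs i),
      forall i j, i <= k -> j <= k -> Bs i = Bs j -> i = j,
      forall i, 0 < i <= k -> us i \in Bs i.-1 /\ us i \in Bs i
    & forall i j, 0 < i <= k -> 0 < j <= k -> us i = us j -> i = j].

Lemma block_chain_rev k Bs us : block_chain k Bs us ->
  block_chain k (fun i => Bs (k - i)) (fun i => us (k.+1 - i)).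
Proof.
case=> Bs_block Bs_inj us_in us_inj; split=> [i ik | i j ik jk E | i ik | i j ik jk E].
- exact/Bs_block/leq_subr.
- suff : k - i = k - j by lia.
  by apply: Bs_inj E; rewrite leq_subr.
- have [] := us_in (k.+1 - i) (_ : 0 < k.+1 - i <= k); first lia.
  have -> : k - i.-1 = k.+1 - i by lia.
  by have -> : (k.+1 - i).-1 = k - i by lia.
- suff : k.+1 - i = k.+1 - j by lia.
  by apply: us_inj E; lia.
Qed.

Lemma block_chain_reach k Bs us m y : block_chain k Bs us -> 0 < m <= k ->
  y \in Bs m :\ us 1 -> exists2 z, z \in Bs 1 :\ us 1 & linked [set~ us 1] z y.
Proof.
case=> Bs_block _ us_in us_inj; elim: m y => [// | [|m] IHm] y mk yBu.
  by exists y => //; apply: connect0.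
have [um1 um] := us_in m.+2 mk.
have u_neq : us m.+2 != us 1 by apply: contra_neq (us_inj _ _ mk (_ : 0 < 1 <= k)) _; lia.
have umD : us m.+2 \in Bs m.+1 :\ us 1 by rewrite !inE u_neq.
have [z zB1 zum] := IHm _ (ltnW mk) umD.
exists z => //; apply: connect_trans zum _.
apply: linked_subset (_ : Bs m.+2 :\ us 1 \subset [set~ us 1]) _; first by rewrite setDE subsetIr.
have /connected_onP := (block_nonseparable (Bs_block _ mk)).2 (us 1).
by apply=> //; rewrite !inE u_neq.
Qed.

Lemma block_chain_separates k Bs us w w' : 0 < k -> block_chain k Bs us ->
  w \in Bs 0 -> w != us 1 -> w' \in Bs k -> w' != us k ->
  w' != us 1 /\ ~ linked [set~ us 1] w w'.
Proof.
move=> k_gt0 chain wB0 wu w'Bk w'uk; have [Bs_block Bs_inj us_in us_inj] := chain.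
have k1 : 0 < 1 <= k by rewrite k_gt0.
have kk : 0 < k <= k by rewrite k_gt0 leqnn.
have [uB0 uB1] := us_in 1 k1.
have w_sep z : z \in Bs 1 :\ us 1 -> ~ linked [set~ us 1] w z.
  rewrite !inE => /andP [zu zB1].
  apply: (block_cut_separates (Bs_block 0 isT) (Bs_block 1 k_gt0) _ uB0 uB1 wB0 wu zB1 zu).
  exact: contra_neq (Bs_inj 0 1 isT k_gt0) isT.
have w'u : w' != us 1.
  have [k_eq1 | k_neq1] := eqVneq k 1; first by rewrite -k_eq1.
  apply/eqP => w'E; have [_ ukBk] := us_in k kk.
  have ukNu : us k != us 1 by apply: contra_neq (us_inj _ _ kk k1) k_neq1.
  have ukD : us k \in Bs k :\ us 1 by rewrite !inE ukNu.
  have [z] := block_chain_reach chain kk ukD; rewrite !inE => /andP [zu zB1].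
  have uBk : us 1 \in Bs k by rewrite -w'E.
  apply: (block_cut_separates (Bs_block 1 k_gt0) (Bs_block k (leqnn k)) _ uB1 uBk zB1 zu ukBk ukNu).
  by apply: contra_neq (Bs_inj 1 k k_gt0 (leqnn k)) _; rewrite eq_sym.
split=> // ww'; have w'D : w' \in Bs k :\ us 1 by rewrite !inE w'u.
have [z zB1 zw'] := block_chain_reach chain kk w'D.
by rewrite linked_sym in zw'; apply: (w_sep z zB1); apply: connect_trans ww' zw'.
Qed.

Definition nbhd v : {set T} := [set x | (x == v) || e v x].

Lemma nbhd_sym x y : (x \in nbhd y) = (y \in nbhd x).
Proof. by rewrite !inE eq_sym esym. Qed.

Lemma linked_nbhd A v x : v \in A -> x \in A -> x \in nbhd v -> linked A v x.
Proof.
by move=> vA xA; rewrite inE => /predU1P [-> | vx]; [apply: connect0 | apply: linked_edge].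
Qed.

Lemma linked_setT x y : graph_connected e -> linked [set: T] x y.
Proof. by move/(_ x y); apply: connect_sub => a b ab; apply: linked_edge; rewrite ?inE. Qed.

Section Hole.
Hypotheses (eirr : irreflexive e) (Gconn : graph_connected e).
Variables (B : {set T}) (u w w' : T).
Hypotheses (Bnsep : nonseparable B) (uB : u \in B) (wB : w \in B) (wu : w != u)
  (uw : ~~ e u w) (w'u : w' != u) (ww' : ~ linked [set~ u] w w').

Lemma hole_nbhd_linked x : x \in nbhd w -> linked [set~ u] w x.
Proof.
move=> wx; have xu : x != u.
  by apply: contraTneq wx => ->; rewrite inE negb_or eq_sym wu esym uw.
by apply: linked_nbhd wx; rewrite !inE.
Qed.

Lemma hole_nbhd_disjoint x : x \in nbhd w -> x \notin nbhd w'.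
Proof.
move=> xw; apply/negP => w'x; apply: ww'.
have wx := hole_nbhd_linked xw.
have xu : x \in [set~ u] by apply: (linked_mem wx); rewrite !inE.
have w'x' : linked [set~ u] w' x by apply: linked_nbhd w'x => //; rewrite !inE.
by rewrite linked_sym in w'x'; apply: connect_trans wx w'x'.
Qed.

Lemma hole_escape x : e w x -> linked [set~ x] w w'.
Proof.
move=> wx; have wx_u : linked [set~ u] w x.
  by apply: hole_nbhd_linked; rewrite inE wx orbT.
have xu : x != u by have := linked_mem wx_u; rewrite !inE => /(_ wu).
have xw : x != w by apply: contraTneq wx => ->; rewrite eirr.
have wu_x : linked [set~ x] w u.
  have /connected_onP Bx := Bnsep.2 x.
  apply: linked_subset (Bx w u _ _); first by rewrite setDE subsetIr.
    by rewrite !inE eq_sym xw.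
  by rewrite !inE eq_sym xu.
have w'Nu : w' \notin [set u] by rewrite inE.
have [d [a [w'd da /set1P au _]]] :=
  linked_exit (linked_setT w' u Gconn) (in_setT w') w'Nu (set11 u).
rewrite setTD in w'd; subst a.
have w'x : w' != x by apply: contra_not_neq ww' => ->.
have w'd_x : linked [set~ x] w' d.
  apply: linked_within w'd => z w'z; rewrite !inE; apply: contra_not_neq ww' => zx.
  by rewrite zx linked_sym in w'z; apply: connect_trans wx_u w'z.
have dx : d != x by have := linked_mem w'd_x; rewrite !inE => /(_ w'x).
have ud_x : linked [set~ x] u d.
  by apply: linked_edge; rewrite ?inE ?(eq_sym u) ?dx // esym.
by rewrite linked_sym in w'd_x; apply: connect_trans (connect_trans wu_x ud_x) w'd_x.
Qed.

End Hole.

Lemma linked_robber_reach occ x y : linked (~: occ) x y -> connect (robber_reach e occ) x y.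
Proof.
apply: connect_sub => a b /and3P [_ bNocc ab].
by apply: connect1; rewrite /robber_reach /= ab -in_setC.
Qed.

Lemma robber_evades a b c c' :
  (forall x, x \in nbhd a -> x \notin nbhd b) -> (forall x, e a x -> linked [set~ x] a b) ->
  c \notin nbhd a -> c' \in nbhd c ->
  a != c' /\
  exists2 r, connect (robber_reach e [set c']) a r & r \in [set a; b] /\ c' \notin nbhd r.
Proof.
move=> far escape cNa c'c; have ac' : a != c' by apply: contraNneq cNa => ->; rewrite nbhd_sym.
split=> //; have [c'a | c'Na] := boolP (c' \in nbhd a); last first.
  by exists a; [apply: connect0 | split; rewrite // !inE eqxx].
exists b; last by split; [rewrite !inE eqxx orbT | apply: far].
by apply/linked_robber_reach/escape; move: c'a; rewrite inE eq_sym (negbTE ac').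
Qed.

Lemma occupied1 (C : {ffun 'I_1 -> T}) : occupied C = [set C ord0].
Proof.
apply/setP=> y; rewrite inE.
by apply/imsetP/eqP => [[i _ ->] | ->]; [rewrite (ord1 i) | exists ord0].
Qed.

Lemma cop_win_invariant k (P : {ffun 'I_k -> T} -> T -> Prop) :
  (forall C C' r, P C r -> cop_move e C C' -> r \notin occupied C' /\
     exists2 r', connect (robber_reach e (occupied C')) r r' & P C' r') ->
  forall C r, P C r -> ~ cop_win e C r.
Proof.
move=> safe C r Pr win; move: C r win Pr.
fix IH 3 => C r [{}C C' {}r mv capture] Pr.
have [rNocc [r' rr' Pr']] := safe C C' r Pr mv.
case: capture => [rocc | win]; first by rewrite rocc in rNocc.
exact: IH C' r' (win r' rr') Pr'.
Qed.

Lemma one_cop_loses w w' :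
  (forall x, x \in nbhd w -> x \notin nbhd w') ->
  (forall x, e w x -> linked [set~ x] w w') -> (forall x, e w' x -> linked [set~ x] w' w) ->
  ~ cops_win e 1.
Proof.
move=> far escape escape' [C0 win].
have far' x : x \in nbhd w' -> x \notin nbhd w by apply: contraTN => /far.
pose P (C : {ffun 'I_1 -> T}) r := r \in [set w; w'] /\ C ord0 \notin nbhd r.
have safe C C' r : P C r -> cop_move e C C' -> r \notin occupied C' /\
    exists2 r', connect (robber_reach e (occupied C')) r r' & P C' r'.
  case=> rww' cNr /forallP/(_ ord0) mv; have {}mv : C' ord0 \in nbhd (C ord0) by rewrite inE.
  rewrite occupied1 inE; case/set2P: rww' cNr => -> cNr.
    by have [wc' [r' wr' r'P]] := robber_evades far escape cNr mv; split; [| exists r'].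
  have [w'c' [r' w'r' [r'w'w c'Nr']]] := robber_evades far' escape' cNr mv.
  by split; [| exists r'; rewrite // /P setUC].
have [C0w | C0Nw] := boolP (C0 ord0 \in nbhd w).
  by apply: (cop_win_invariant safe _ (win w')); split; [rewrite !inE eqxx orbT | apply: far].
by apply: (cop_win_invariant safe _ (win w)); split; rewrite // !inE eqxx.
Qed.

End SymmetricGraph.

Theorem mainTheorem10 (T : finType) (e : rel T) :
  symmetric e -> irreflexive e -> graph_connected e ->
  c_infty_eq e 1 ->
  ~ (exists B B' : {set T}, hallway e B B').
Proof.
move=> esym eirr Gconn [one_cop _] [_ [_ [_ [_ [_ [k [Bs [us [k_gt0 [<- [<- [Bs_block
  [Bs_inj [us_in [us_inj [hole hole']]]]]]]]]]]]]]]].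
have chain : block_chain e k Bs us by split=> // i /us_in [].
case: hole => _ [/(block_nonseparable esym) B0nsep [u1B0 [w [wB0 wu1 u1w]]]].
case: hole' => _ [/(block_nonseparable esym) Bknsep [ukBk [w' [w'Bk w'uk ukw']]]].
have [w'u1 ww'] := block_chain_separates esym k_gt0 chain wB0 wu1 w'Bk w'uk.
have := block_chain_separates esym k_gt0 (block_chain_rev chain).
rewrite /= subn0 subnn subSS subn0 subSnn => /(_ w' w w'Bk w'uk wB0 wu1) [wuk w'w].
apply: (one_cop_loses esym (hole_nbhd_disjoint esym wu1 u1w w'u1 ww')) one_cop.
  exact: (hole_escape esym eirr Gconn B0nsep u1B0 wB0 wu1 u1w w'u1 ww').
exact: (hole_escape esym eirr Gconn Bknsep ukBk w'Bk w'uk ukw' wuk w'w).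
Qed.
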